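(* Let $d\ge 1$ and $k'$ be integers with $k'>2d+3$. Consider an average-based EQ AHG or an average-based AL AHG over $n$ players with $n\ge k'(d+1)$, whose network of friends $G$ contains a (possibly pinched) $(d,k')$-dome gadget on a player set $P$, such that no player of $P$ other than its top player $p^\star$ has a friend outside $P$. Let $\Gamma$ be a coalition structure with $P\in\Gamma$. If a coalition $C$ blocks $\Gamma$, then $C$ contains no player of the base clique of the gadget.
   Context: An AHG is given by a finite player set $N$, $n=|N|$, and a simple undirected graph $G=(N,\mathcal{E})$ (network of friends). For $i\in N$, $F_i$ is the set of neighbors (friends) of $i$ and $E_i=N\setminus(F_i\cup\{i\})$ its enemies. For a coalition $C\ni i$, $\mathrm{val}_i(C)=n|F_i\cap C|-|E_i\cap C|$. Let $\mathrm{avg}_{F_i}(C)=\sum_{c\in C\cap F_i}\mathrm{val}_c(C)/|C\cap F_i|$ (taken to be $0$ if $C\cap F_i=\emptyset$) and $\mathrm{avg}_{F_i\cup\{i\}}(C)=\sum_{c\in (C\cap F_i)\cup\{i\}}\mathrm{val}_c(C)/|(C\cap F_i)\cup\{i\}|$. With a fixed constant $w\ge n^4$, the average-based EQ utility is $\mathrm{util}_i^{\text{avg-EQ}}(C)=\mathrm{avg}_{F_i\cup\{i\}}(C)$ and the average-based AL utility is $\mathrm{util}_i^{\text{avg-AL}}(C)=\mathrm{val}_i(C)+w\cdot\mathrm{avg}_{F_i}(C)$. A coalition structure is a partition $\Gamma$ of $N$; $\Gamma(i)$ is the coalition containing $i$. A nonempty coalition $C$ blocks $\Gamma$ if every $i\in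 C$ has strictly larger utility from $C$ than from $\Gamma(i)$. A $(d,k')$-dome gadget (for integers $d\ge1$, $k'>2d+1$) on player set $P$ with $|P|=k'$ consists of a top player $p^\star$, $d$ mid players $p_1,\dots,p_d$, and the remaining $k'-d-1$ players forming the base clique $K$; $d$ distinct players $p'_1,\dots,p'_d\in K$ are called fringe players. The friendships among players of $P$ are exactly: $p^\star$ with each $p_j$, $p_j$ with $p'_j$ for each $j$, and every pair of players in $K$. A pinched $(d,k')$-dome gadget is obtained from a $(d,k')$-dome gadget by identifying all $d$ mid players into a single mid player $q$; so its friendships within $P$ are exactly $p^\star$ with $q$, $q$ with each $p'_j$, and every pair within the base clique $K$ (of size $k'-d-1$). ''$G$ contains the gadget on $P$'' means $G[P]$ is exactly this gadget. *)

From mathcomp Require Import all_boot all_order all_algebra.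
Set Implicit Arguments. Unset Strict Implicit. Unset Printing Implicit Defensive.
Import Order.TTheory GRing.Theory Num.Theory.
Local Open Scope ring_scope.

Section AHG.
Variable T : finType.
Variable e : rel T.

Definition friends (i : T) : {set T} := [set j | e i j].
Definition enemies (i : T) : {set T} := [set j | ~~ e i j & j != i].

Definition val (i : T) (C : {set T}) : rat :=
  ((#|T| * #|friends i :&: C|)%N)%:R - (#|enemies i :&: C|)%:R.

Definition avg_over (S C : {set T}) : rat :=
  if S == set0 then 0 else (\sum_(c in S) val c C) / (#|S|)%:R.

Definition avgF (i : T) (C : {set T}) : rat := avg_over (C :&: friends i) C.
Definition avgFi (i : T) (C : {set T}) : rat :=
  avg_over (i |: (C :&: friends i)) C.

Inductive ahg_kind := AvgEQ | AvgAL.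

Definition util (k : ahg_kind) (w : rat) (i : T) (C : {set T}) : rat :=
  match k with
  | AvgEQ => avgFi i C
  | AvgAL => val i C + w * avgF i C
  end.

Definition blocks (k : ahg_kind) (w : rat) (Gamma : {set {set T}}) (C : {set T}) :=
  C != set0 /\ forall i, i \in C -> util k w i (pblock Gamma i) < util k w i C.

(* (d,k')-dome gadget on P with top p and base clique K:
   mids m j, fringes f j ∈ K, |K| = k' - d - 1, P = {p} ∪ mids ∪ K (disjoint),
   and G[P] is exactly the gadget. *)
Definition dome_gadget (d k' : nat) (P : {set T}) (p : T) (K : {set T}) : Prop :=
  exists (m f : 'I_d -> T),
    injective m /\ injective f /\
    (forall j, m j != p /\ m j \notin K /\ f j \in K) /\
    p \notin K /\ #|K| = (k' - d - 1)%N /\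
    P = p |: ([set m j | j : 'I_d] :|: K) /\
    (forall x y, x \in P -> y \in P ->
          e x y = [|| (x == p) && (y \in [set m j | j : 'I_d]),
                      (y == p) && (x \in [set m j | j : 'I_d]),
                      [exists j, (x == m j) && (y == f j)],
                      [exists j, (y == m j) && (x == f j)] |
                      [&& x \in K, y \in K & x != y]]).

(* pinched (d,k')-dome gadget: all mids identified into a single mid q *)
Definition pinched_dome_gadget (d k' : nat) (P : {set T}) (p : T) (K : {set T}) : Prop :=
  exists (q : T) (f : 'I_d -> T),
    injective f /\ q != p /\ q \notin K /\ p \notin K /\
    (forall j, f j \in K) /\ #|K| = (k' - d - 1)%N /\
    P = p |: (q |: K) /\
    (forall x y, x \in P -> y \in P ->
          e x y = [|| (x == p) && (y == q), (y == p) && (x == q),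
                      (x == q) && (y \in [set f j | j : 'I_d]),
                      (y == q) && (x \in [set f j | j : 'I_d]) |
                      [&& x \in K, y \in K & x != y]]).

End AHG.

(* Every base player lies in P, so C blocks only if each base player of C strictly
   prefers C to P.  Inside the gadget the value of a base player in a coalition C
   is (n+1)(|C :&: K| - 1) - (|C| - 1), plus n+1 for a fringe whose mid is also in
   C.  Some base player x of C never strictly gains:
   - if C = P :\ p, take x a fringe: removing p raises each value by at most 1 but
     lowers the value of the mid of x, a friend of p, by n;
   - if C :&: K contains a non-fringe x, its average in C is at most its average in
     P, for otherwise C would contain K and all mids, hence P :\ p;
   - if C :&: K consists of fringes, every value x sees in C is at most n(d+1),
     while in P it sees the clique K, whose values are of order n|K|.
   For AL, the weight w >= n^4 makes any strict change of the friends' average (a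
   fraction with denominator at most n) dominate the player's own value. *)

From Pilot Require Import Defs.
From mathcomp Require Import all_boot all_order all_algebra.
From mathcomp Require Import zify ring lra.
Set Implicit Arguments. Unset Strict Implicit. Unset Printing Implicit Defensive.
Import Order.TTheory GRing.Theory Num.Theory.
Local Open Scope ring_scope.

Lemma int_frac_gap (R : numFieldType) (X1 X2 : int) (a1 a2 m : nat) :
  (0 < a1 <= m)%N -> (0 < a2 <= m)%N -> X1%:~R / a1%:R < X2%:~R / a2%:R :> R ->
  1 <= (X2%:~R / a2%:R - X1%:~R / a1%:R) * (m * m)%:R :> R.
Proof.
move=> /andP[a1p a1m] /andP[a2p a2m].
have a12 : 0 < (a1 * a2)%:R :> R by rewrite ltr0n muln_gt0 a1p.
have diffE : X2%:~R / a2%:R - X1%:~R / a1%:R = (X2 * a1 - X1 * a2)%:~R / (a1 * a2)%:R :> R.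
  rewrite rmorphB !rmorphM /= -!pmulrn; field.
  by rewrite !pnatr_eq0 -!lt0n a1p a2p.
move=> lt12; rewrite diffE.
have : 0 < (X2 * a1 - X1 * a2)%:~R / (a1 * a2)%:R :> R by rewrite -diffE subr_gt0.
rewrite pmulr_lgt0 ?invr_gt0 // => Z0.
have Z1 : 1 <= (X2 * a1 - X1 * a2)%:~R :> R by rewrite ler1z; move: Z0; rewrite ltr0z.
rewrite mulrAC ler_pdivlMr // mul1r.
apply: le_trans (_ : (m * m)%:R <= _); first by rewrite ler_nat leq_mul.
by rewrite ler_peMl.
Qed.

Lemma ler_pdiv_nat (R : numFieldType) (x : R) (m k : nat) : 0 <= x -> (0 < m <= k)%N ->
  x / k%:R <= x / m%:R.
Proof.
move=> x0 /andP[m0 mk]; apply: ler_wpM2l => //.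
by rewrite lef_pV2 ?posrE ?ltr0n ?ler_nat //; apply: leq_trans mk.
Qed.

Lemma natr_mul_div (R : numFieldType) (x : R) (m : nat) : (0 < m)%N -> m%:R * (x / m%:R) = x.
Proof. by move=> m0; rewrite mulrC divfK // pnatr_eq0 -lt0n. Qed.

Section AHGValues.
Variables (T : finType) (e : rel T).
Hypothesis e_irr : irreflexive e.
Local Notation n := #|T|.
Local Notation val := (Defs.val e).
Local Notation avg_over := (Defs.avg_over e).

Lemma val_mem (i : T) (C : {set T}) : i \in C ->
  val i C = (n + 1)%:R * #|friends e i :&: C|%:R - (#|C|%:R - 1).
Proof.
move=> iC; rewrite /Defs.val.
have -> : enemies e i :&: C = (C :\ i) :\: friends e i.
  by apply/setP => z; rewrite !inE; case: (e i z); case: (z == i); case: (z \in C).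
have -> : friends e i :&: C = (C :\ i) :&: friends e i.
  apply/setP => z; rewrite !inE; case: (boolP (e i z)) => [iz|]; last by rewrite !andbF.
  by rewrite andbT; case: eqP iz => // ->; rewrite e_irr.
have := cardsID (friends e i) (C :\ i); have := cardsD1 i C; rewrite iC => hC hD.
have -> : #|C| = (#|(C :\ i) :&: friends e i| + #|(C :\ i) :\: friends e i|).+1 by lia.
rewrite -natr1 !natrD !natrM; ring.
Qed.

Lemma val_le_friends (i : T) (C : {set T}) : val i C <= (n * #|friends e i :&: C|)%:R.
Proof. by rewrite /Defs.val lerBlDr lerDl. Qed.

Lemma val_bounds (i : T) (C : {set T}) : - (n - 1)%:R <= val i C <= (n * (n - 1))%:R.
Proof.
have card_le1 (A : {set T}) : A \subset [set~ i] -> (#|A| <= n - 1)%N.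
  by move/subset_leq_card; rewrite cardsC1 subn1.
apply/andP; split.
  have : (#|enemies e i :&: C| <= n - 1)%N.
    by apply: card_le1; apply/subsetP => z; rewrite !inE => /andP[/andP[_ ->]].
  rewrite -(ler_nat rat) /Defs.val; have := ler0n rat (n * #|friends e i :&: C|); lra.
apply: le_trans (val_le_friends i C) _; rewrite ler_nat leq_mul //.
apply: card_le1; apply/subsetP => z; rewrite !inE => /andP[iz _].
by case: eqP iz => // ->; rewrite e_irr.
Qed.

Lemma avg_over_sum (S C : {set T}) : S != set0 -> avg_over S C = (\sum_(c in S) val c C) / #|S|%:R.
Proof. by rewrite /Defs.avg_over => /negbTE ->. Qed.

Lemma avg_over_le (S C : {set T}) (B : rat) : 0 <= B -> {in S, forall c, val c C <= B} ->
  avg_over S C <= B.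
Proof.
move=> B0 hB; rewrite /Defs.avg_over; case: eqP => // /eqP S0.
rewrite ler_pdivrMr ?ltr0n ?card_gt0 //.
by apply: le_trans (_ : \sum_(c in S) B <= _); [exact: ler_sum | rewrite sumr_const mulr_natr].
Qed.

Lemma sum_val_indicator (S C B : {set T}) (b m : rat) :
  {in S, forall c, val c C = b + m *+ (c \in B)} ->
  \sum_(c in S) val c C = b *+ #|S| + m *+ #|S :&: B|.
Proof.
move=> hS; rewrite (eq_bigr _ hS) big_split /= sumr_const sumrMnr; congr (_ + m *+ _).
rewrite -sum1_card big_mkcond [RHS]big_mkcond /=; apply: eq_bigr => c _.
by rewrite inE; case: (c \in S); case: (c \in B).
Qed.

Lemma avg_over_indicator (S C B : {set T}) (b m : rat) : S != set0 ->
  {in S, forall c, val c C = b + m *+ (c \in B)} ->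
  avg_over S C = b + m * (#|S :&: B|%:R / #|S|%:R).
Proof.
move=> S0 /sum_val_indicator sumE; rewrite avg_over_sum // sumE.
have S0' : #|S|%:R != 0 :> rat by rewrite pnatr_eq0 -lt0n card_gt0.
by rewrite -[b *+ _]mulr_natr -[m *+ _]mulr_natr mulrDl mulfK // mulrA.
Qed.

Lemma avg_over_frac (S C : {set T}) : (0 < n)%N ->
  exists (X : int) (a : nat), (0 < a <= n)%N /\ avg_over S C = X%:~R / a%:R.
Proof.
move=> n0; rewrite /Defs.avg_over; case: eqP => [_|/eqP S0].
  by exists 0, 1%N; rewrite mul0r n0.
exists (\sum_(c in S) ((n * #|friends e c :&: C|)%:Z - #|enemies e c :&: C|%:Z)), #|S|.
rewrite card_gt0 S0 max_card rmorph_sum; split=> //; congr (_ / _).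
by apply: eq_bigr => c _; rewrite rmorphB.
Qed.

Lemma avg_over_gap (S1 C1 S2 C2 : {set T}) : (0 < n)%N ->
  avg_over S1 C1 < avg_over S2 C2 ->
  1 <= (avg_over S2 C2 - avg_over S1 C1) * (n * n)%:R.
Proof.
move=> n0; have [X1 [a1 [ha1 ->]]] := avg_over_frac S1 C1 n0.
have [X2 [a2 [ha2 ->]]] := avg_over_frac S2 C2 n0.
exact: int_frac_gap.
Qed.

Lemma util_AL_lt (w : rat) (i : T) (C D : {set T}) : (0 < n)%N -> (n ^ 4)%:R <= w ->
  avgF e i C < avgF e i D -> util e AvgAL w i C < util e AvgAL w i D.
Proof.
move=> n0 hw lt_avg; rewrite /util.
have gap := avg_over_gap n0 lt_avg; move: lt_avg gap; rewrite /avgF.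
set u := avg_over _ C; set v := avg_over _ D => lt_uv gap.
have /andP[_ vC] := val_bounds i C; have /andP[vD _] := val_bounds i D.
have n4 : (n ^ 4)%:R = (n * n)%:R * (n * n)%:R :> rat by rewrite -natrM; congr _%:R; lia.
have big : (n * n)%:R <= w * (v - u).
  apply: le_trans (_ : (n ^ 4)%:R * (v - u) <= _); last by rewrite ler_wpM2r // subr_ge0 ltW.
  by rewrite n4 -mulrA ler_peMr // mulrC.
have : ((n * (n - 1))%N)%:R + (n - 1)%:R < (n * n)%:R :> rat by rewrite -natrD ltr_nat; nia.
lra.
Qed.
End AHGValues.

Lemma eq_fringe_nat (n d k N : nat) :
  (0 < d)%N -> (d + 3 <= k)%N -> (0 < N)%N -> (N <= k + d + 1)%N ->
  ((k + d + 1) * (d + 1) <= n)%N ->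
  ((k + 1) * (n * (d + 1)) + (k + 1) * (N - 1) < k * ((n + 1) * (k - 1)) + (n + 1) * (d + 1))%N.
Proof.
move=> d0 dk N0 Nk nk; have [j ek] : exists j, k = (j + d + 2)%N by exists (k - d - 2)%N; lia.
have [M eN] : exists M, N = M.+1 by exists N.-1; lia.
subst k N.
have hM : (M <= j + 2 * d + 2)%N by lia.
have hn : ((j + 2 * d + 3) * (d + 1) <= n)%N.
  by move: nk; rewrite (_ : (j + d + 2 + d + 1 = j + 2 * d + 3)%N); last lia.
rewrite (_ : (j + d + 2 - 1 = j + d + 1)%N) ?subn1 //=; last lia.
clear -d0 dk hM hn; nia.
Qed.

Lemma al_fringe_nat (n d k N : nat) :
  (0 < d)%N -> (d + 3 <= k)%N -> (0 < N)%N -> (N <= k + d + 1)%N ->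
  ((k + d + 1) * (d + 1) <= n)%N ->
  (k * (n * (d + 1)) + k * (N - 1) < (k - 1) * (k - 1) * (n + 1) + (n + 1) * d)%N.
Proof.
move=> d0 dk N0 Nk nk; have [j ek] : exists j, k = (j + d + 2)%N by exists (k - d - 2)%N; lia.
have [M eN] : exists M, N = M.+1 by exists N.-1; lia.
subst k N.
have hM : (M <= j + 2 * d + 2)%N by lia.
have hn : ((j + 2 * d + 3) * (d + 1) <= n)%N.
  by move: nk; rewrite (_ : (j + d + 2 + d + 1 = j + 2 * d + 3)%N); last lia.
rewrite (_ : (j + d + 2 - 1 = j + d + 1)%N) ?subn1 //=; last lia.
clear -d0 dk hM hn; nia.
Qed.

(* k = |K| and N = |P|.  The bonus lemmas compare the average of a non-fringe
   base player in C with its average in P, where s = |C :&: K|, c = |C| and E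
   counts the fringes of C :&: K whose mid is in C.  The fringe lemmas bound from
   below the total value in P of the friends of a fringe: its mid, and K (with or
   without the fringe itself). *)
Section DomeArithmetic.
Variables (n d k N : nat).
Hypotheses (d_gt0 : (0 < d)%N) (k_ge : (d + 3 <= k)%N).
Hypotheses (N_gt0 : (0 < N)%N) (N_le : (N <= k + d + 1)%N).
Hypothesis n_ge : ((k + d + 1) * (d + 1) <= n)%N.
Local Notation a := ((n + 1)%:R : rat).

Let a_k : d%:R + 1 < a / k%:R.
Proof.
rewrite ltr_pdivlMr ?ltr0n; last lia.
by rewrite natr1 -natrM ltr_nat; nia.
Qed.

Let a_kd : d%:R + 2 < (d%:R + 1) * (a / k%:R).
Proof.
apply: (@le_lt_trans _ _ ((d%:R + 1) * (d%:R + 1))); last by rewrite ltr_pM2l // ltr_wpDl.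
have h : ((d + 2)%:R <= ((d + 1) * (d + 1))%:R :> rat) by rewrite ler_nat; nia.
by rewrite natrM !natrD in h.
Qed.

Lemma eq_bonus_le (s c E : nat) :
  (0 < s <= k)%N -> (s <= c)%N -> (E < s)%N -> (E <= d)%N -> (s = k -> E = d -> N <= c)%N ->
  a * (s%:R - 1) - (c%:R - 1) + a * (E%:R / s%:R)
    <= a * (k%:R - 1) - (N%:R - 1) + a * (d%:R / k%:R).
Proof.
move=> /andP[s0 sk] sc Es Ed full.
have [sk'|/eqP sk'] := eqVneq s k; first subst s.
all: rewrite mulrCA [a * (d%:R / _)]mulrCA; have := a_k; set q := a / k%:R => a_k'.
all: have q0 : 0 <= q by apply: le_trans (ltW a_k'); rewrite addr_ge0.
  have [Ed'|/eqP Ed'] := eqVneq E d.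
    by subst E; have := full erefl erefl; rewrite -(ler_nat rat); lra.
  have : (E + 1)%:R * q <= d%:R * q by apply: ler_wpM2r; rewrite // ler_nat; lia.
  have Nc : (N%:R <= (c + d + 1)%:R :> rat) by rewrite ler_nat; lia.
  rewrite !natrD in Nc; rewrite natrD; lra.
(* E A <= a - A, and A + d q > d + 2 absorbs |P| - |C|. *)
set A := a / s%:R.
have Aq : q <= A by apply: ler_pdiv_nat; rewrite ?s0 ?sk.
have EA : E%:R * A <= (s - 1)%:R * A.
  by apply: ler_wpM2r; [apply: le_trans Aq | rewrite ler_nat; lia].
have sA : s%:R * A = a by exact: natr_mul_div.
have sk1 : s%:R + 1 <= k%:R :> rat by rewrite natr1 ler_nat; lia.
have a1 : 0 <= (a - 1) * (k%:R - 1 - s%:R).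
  by apply: mulr_ge0; [rewrite subr_ge0 ler1n addn1 | lra].
have Nc : ((N + s + 1)%:R <= (c + k + d + 2)%:R :> rat) by rewrite ler_nat; lia.
have := a_kd; rewrite -/q; rewrite !natrD in Nc; rewrite (natrB _ s0) in EA.
nra.
Qed.
Lemma al_bonus_lt (s c E : nat) :
  (1 < s <= k)%N -> (s <= c)%N -> (E < s)%N -> (E <= d)%N -> (s < k \/ E < d)%N ->
  a * (s%:R - 1) - (c%:R - 1) + a * (E%:R / (s - 1)%:R)
    < a * (k%:R - 1) - (N%:R - 1) + a * (d%:R / (k - 1)%:R).
Proof.
move=> /andP[s1 sk] sc Es Ed small.
have k1 : (1 < k)%N by lia.
have s0 : (0 < s)%N by lia.
have Nc : (N%:R <= (c + (k - s) + d + 1)%:R :> rat) by rewrite ler_nat; lia.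
rewrite !natrD (natrB _ sk) in Nc.
have [sk'|/eqP sk'] := eqVneq s k; first subst s.
all: rewrite mulrCA [a * (d%:R / _)]mulrCA; set r := a / (k - 1)%:R.
all: have := a_k; have := a_kd; set q := a / k%:R => a_kd' a_k'.
all: have q0 : 0 <= q by apply: le_trans (ltW a_k'); rewrite addr_ge0.
all: have rq : q <= r by apply: ler_pdiv_nat => //; lia.
  have Ed' : (E + 1 <= d)%N by case: small; lia.
  have : (E + 1)%:R * r <= d%:R * r.
    by apply: ler_wpM2r; [apply: le_trans q0 rq | rewrite ler_nat].
  rewrite natrD; lra.
set B := a / (s - 1)%:R.
have sB : (s - 1)%:R * B = a by apply: natr_mul_div; lia.
have Bq : q <= B by apply: ler_pdiv_nat => //; lia.
rewrite (natrB _ s0) in sB.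
have [sk2|sk2] := leqP (s + 2) k.
  have EB : E%:R * B <= (s%:R - 1) * B.
    by apply: ler_wpM2r; [lra | rewrite -(natrB _ s0) ler_nat; lia].
  have a1 : 0 <= a * (k%:R - 2 - s%:R).
    have : (s + 2)%:R <= k%:R :> rat by rewrite ler_nat.
    by rewrite natrD => ?; apply: mulr_ge0 => //; lra.
  have aN : (N + 1)%:R <= a :> rat by rewrite ler_nat; nia.
  have dr : 0 <= d%:R * r by rewrite mulr_ge0 // (le_trans q0 rq).
  have := ler0n rat c; rewrite natrD in aN; lra.
(* Here s = k - 1, so E <= d <= s - 2 gives E B <= a - B, and B + d r > d + 2. *)
have EB : E%:R * B <= (s%:R - 2) * B.
  by apply: ler_wpM2r; [lra | rewrite -(natrB _ s1) ler_nat; lia].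
have ks : k%:R = s%:R + 1 :> rat by rewrite natr1; congr _%:R; lia.
have dr : d%:R * q <= d%:R * r by rewrite ler_wpM2l.
rewrite ks in Nc *; lra.
Qed.
Lemma eq_fringe_sum_gt :
  (n * (d + 1))%:R * (k + 1)%:R
    < (a - (N%:R - 1)) + ((a * (k%:R - 1) - (N%:R - 1)) *+ k + a *+ d).
Proof.
have k1 : (1 <= k)%N by lia.
have := eq_fringe_nat d_gt0 k_ge N_gt0 N_le n_ge.
rewrite -(ltr_nat rat) -subr_gt0 !natrD !natrM (natrB _ k1) (natrB _ N_gt0) => lt.
rewrite -subr_gt0; apply: (lt_le_trans lt).
by rewrite le_eqVlt; apply/orP; left; apply/eqP; ring.
Qed.

Lemma al_fringe_sum_gt :
  (n * (d + 1))%:R * k%:R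
    < (a - (N%:R - 1))
      + ((a * (k%:R - 1) - (N%:R - 1)) *+ k + a *+ d - (a * (k%:R - 1) - (N%:R - 1) + a)).
Proof.
have k1 : (1 <= k)%N by lia.
have := al_fringe_nat d_gt0 k_ge N_gt0 N_le n_ge.
rewrite -(ltr_nat rat) -subr_gt0 !natrD !natrM (natrB _ k1) (natrB _ N_gt0) => lt.
rewrite -subr_gt0; apply: (lt_le_trans lt).
by rewrite le_eqVlt; apply/orP; left; apply/eqP; ring.
Qed.
End DomeArithmetic.

(* What both gadgets look like from the base clique K: a fringe y of Fr has a
   single friend mu y (its mid) outside K, a friend of the top p; every other
   player of P outside K is a mid, whose friends in P are p and fringes. *)
Record dome_frame (T : finType) (e : rel T) (P : {set T}) (p : T) (K Fr : {set T})
    (mu : T -> T) (d : nat) : Prop := DomeFrame {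
  frame_top : p \in P;
  frame_base : K \subset P;
  frame_top_base : p \notin K;
  frame_fringe : Fr \subset K;
  frame_card_fringe : #|Fr| = d;
  frame_card : (#|P| <= #|K| + d + 1)%N;
  frame_edge_base : forall y z, y \in K -> z \in P ->
    e y z = ((z \in K) && (z != y)) || ((y \in Fr) && (z == mu y));
  frame_mid : forall y, y \in Fr -> [/\ mu y \in P, mu y \notin K, mu y != p & e (mu y) p];
  frame_mid_onto : forall z, z \in P -> z != p -> z \notin K -> exists2 y, y \in Fr & z = mu y;
  frame_mid_edge : forall z u, z \in P -> z != p -> z \notin K -> u \in P -> e z u ->
    (u == p) || (u \in Fr)
}.

Section DomeFrame.
Variables (T : finType) (e : rel T).
Hypothesis e_irr : irreflexive e.
Variables (P K Fr : {set T}) (p : T) (mu : T -> T) (d : nat).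
Hypothesis G : dome_frame e P p K Fr mu d.
Hypothesis P_closed : forall x y, x \in P -> x != p -> e x y -> y \in P.
Local Notation n := #|T|.
Local Notation a := ((n + 1)%:R : rat).
Local Notation val := (Defs.val e).

Let base_P y : y \in K -> y \in P. Proof. exact: subsetP (frame_base G) y. Qed.

Let base_top y : y \in K -> y != p.
Proof. by apply: contraTneq => ->; exact: frame_top_base G. Qed.

Let fringe_base y : y \in Fr -> y \in K. Proof. exact: subsetP (frame_fringe G) y. Qed.

Lemma edge_base y z : y \in K -> z \in K -> e y z = (z != y).
Proof.
move=> yK zK; rewrite (frame_edge_base G) ?base_P // zK /=.
case: (boolP (y \in Fr)) => [yF|]; last by rewrite orbF.
have [_ muK _ _] := frame_mid G yF.
by case: (eqVneq z (mu y)) => [ez|]; [rewrite -ez zK in muK | rewrite orbF].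
Qed.

Lemma edge_base_out y z : y \in K -> z \notin K -> e y z = (y \in Fr) && (z == mu y).
Proof.
move=> yK zK; case: (boolP (z \in P)) => zP; first by rewrite (frame_edge_base G) // (negbTE zK).
have -> : e y z = false.
  by apply: contraNF zP => /(P_closed (base_P yK) (base_top yK)).
case: (boolP (y \in Fr)) => //= yF; have [muP _ _ _] := frame_mid G yF.
by apply/esym/negP => /eqP ez; rewrite ez muP in zP.
Qed.

Definition attached (C : {set T}) := [set y in Fr | mu y \in C].

Lemma in_attached y (C : {set T}) : (y \in attached C) = (y \in Fr) && (mu y \in C).
Proof. by rewrite inE. Qed.

Lemma card_friends_base y (C : {set T}) : y \in K ->
  #|friends e y :&: C| = (#|(C :&: K) :\ y| + (y \in attached C))%N.
Proof.
move=> yK; rewrite -(cardsID K (friends e y :&: C)).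
have -> : friends e y :&: C :&: K = (C :&: K) :\ y.
  apply/setP => z; rewrite !inE; case: (boolP (z \in K)) => zK; last by rewrite !andbF.
  by rewrite edge_base // !andbT andbC.
have -> : friends e y :&: C :\: K = if y \in attached C then [set mu y] else set0.
  apply/setP => z; rewrite !inE; case: (boolP (z \in K)) => zK /=.
    case: ifP => [/andP[/(frame_mid G)[_ muK _ _] _]|_]; rewrite inE //.
    by apply/esym/eqP => ez; rewrite -ez zK in muK.
  rewrite (edge_base_out yK zK); case: ifP => [/andP[yF muC]|na]; rewrite inE.
    by rewrite yF; case: (eqVneq z (mu y)) => [->|]; rewrite ?muC ?andbF.
  by apply: contraFF na => /andP[/andP[yF /eqP ->] muC]; rewrite yF.
by case: (y \in attached C); rewrite ?cards1 ?cards0.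
Qed.

Definition base_val (C : {set T}) : rat := a * (#|C :&: K|%:R - 1) - (#|C|%:R - 1).

Lemma val_base y (C : {set T}) : y \in C -> y \in K ->
  val y C = base_val C + a *+ (y \in attached C).
Proof.
move=> yC yK; rewrite val_mem // card_friends_base //.
have := cardsD1 y (C :&: K); rewrite inE yC yK => /= cCK.
rewrite /base_val cCK addnC /= natrD; ring.
Qed.

Lemma sum_val_base (S C : {set T}) : S \subset C :&: K ->
  \sum_(z in S) val z C = base_val C *+ #|S| + a *+ #|S :&: attached C|.
Proof.
move=> SCK; apply: sum_val_indicator => z /(subsetP SCK); rewrite inE => /andP[zC zK].
exact: val_base.
Qed.

Lemma avg_val_base (S C : {set T}) : S != set0 -> S \subset C :&: K ->
  avg_over e S C = base_val C + a * (#|S :&: attached C|%:R / #|S|%:R).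
Proof.
move=> S0 SCK; apply: avg_over_indicator => // z /(subsetP SCK).
by rewrite inE => /andP[zC zK]; exact: val_base.
Qed.

Lemma attached_P : attached P = Fr.
Proof.
by apply/setP => y; rewrite in_attached andb_idr // => /(frame_mid G) [].
Qed.

Lemma setI_P_base : P :&: K = K.
Proof. exact/setIidPr/(frame_base G). Qed.

Lemma base_attached_P : K :&: attached P = Fr.
Proof. by rewrite attached_P; exact/setIidPr/(frame_fringe G). Qed.

Lemma friends_nonfringe (C : {set T}) x : x \in K -> x \notin Fr ->
  C :&: friends e x = (C :&: K) :\ x.
Proof.
move=> xK xF; apply/setP => z; rewrite !inE.
case: (boolP (z \in K)) => zK; first by rewrite edge_base // andbT andbC.
by rewrite edge_base_out // (negbTE xF) !andbF.
Qed.

Lemma friends_fringe_P x : x \in Fr -> P :&: friends e x = mu x |: (K :\ x).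
Proof.
move=> xF; have xK := fringe_base xF; have [muP muK _ _] := frame_mid G xF.
apply/setP => z; rewrite !inE; case: (boolP (z \in K)) => zK.
  rewrite edge_base // base_P //= andbT; case: (eqVneq z (mu x)) => [ez|//].
  by move: muK; rewrite -ez zK.
rewrite edge_base_out // xF /= !andbF !orbF.
by case: (eqVneq z (mu x)) => [->|]; rewrite ?muP ?andbF.
Qed.

Lemma covers_all_but_top (C : {set T}) : K \subset C -> Fr \subset attached C ->
  P :\ p \subset C.
Proof.
move=> KC FrC; apply/subsetP => z; rewrite !inE => /andP[zp zP].
case: (boolP (z \in K)) => zK; first exact: subsetP KC z zK.
have [y yF ->] := frame_mid_onto G zP zp zK.
by have := subsetP FrC y yF; rewrite in_attached => /andP[].
Qed.

Lemma val_remove_top i : i \in P -> i != p ->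
  val i (P :\ p) = val i P + 1 - a *+ e i p.
Proof.
move=> iP ip; rewrite !val_mem ?inE ?ip //.
have -> : friends e i :&: (P :\ p) = (friends e i :&: P) :\ p.
  by apply/setP => z; rewrite !inE; case: (z == p); case: (e i z); case: (z \in P).
have := cardsD1 p (friends e i :&: P); rewrite !inE (frame_top G) andbT => ->.
have := cardsD1 p P; rewrite (frame_top G) => /= ->.
rewrite addnC /= !natrD; ring.
Qed.

Lemma sum_val_remove_top (S : {set T}) z0 : S \subset P :\ p -> z0 \in S -> e z0 p ->
  \sum_(z in S) val z (P :\ p) < \sum_(z in S) val z P.
Proof.
move=> SP z0S z0p.
rewrite (eq_bigr (fun z => val z P + 1 - a *+ e z p)); last first.
  by move=> z /(subsetP SP); rewrite !inE => /andP[zp zP]; exact: val_remove_top.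
have drop : a <= \sum_(z in S) a *+ e z p.
  by rewrite (bigD1 z0) //= z0p lerDl sumr_ge0 // => z _; rewrite mulrn_wge0.
have : #|S|%:R < a by rewrite ltr_nat addn1 ltnS max_card.
rewrite sumrB big_split /= sumr_const; lra.
Qed.

Lemma top_removed_no_gain kind w x : (n ^ 4)%:R <= w -> x \in Fr ->
  util e kind w x (P :\ p) < util e kind w x P.
Proof.
move=> hw xF; have xK := fringe_base xF; have [muP muK mup mu_top] := frame_mid G xF.
have n0 : (0 < n)%N by apply/card_gt0P; exists p.
have xp : e x p = false by rewrite edge_base_out ?(frame_top_base G) // xF eq_sym (negbTE mup).
have FC : (P :\ p) :&: friends e x = P :&: friends e x.
  by apply/setP => z; rewrite !inE; case: (eqVneq z p) => [->|]; rewrite ?xp ?andbF.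
have FP : P :&: friends e x \subset P :\ p.
  apply/subsetP => z; rewrite !inE => /andP[-> ez]; rewrite andbT.
  by apply: contraTneq ez => ->; rewrite xp.
have muF : mu x \in P :&: friends e x.
  by rewrite !inE muP (frame_edge_base G) // xF eqxx orbT.
have less (S : {set T}) : S \subset P :\ p -> mu x \in S -> avg_over e S (P :\ p) < avg_over e S P.
  move=> SP muS; have S0 : S != set0 by apply/set0Pn; exists (mu x).
  rewrite !avg_over_sum // ltr_pM2r ?invr_gt0 ?ltr0n ?card_gt0 //.
  exact: sum_val_remove_top mu_top.
case: kind => /=.
  rewrite /avgFi FC; apply: less; last exact: setU1r.
  by rewrite subUset FP sub1set !inE (base_top xK) base_P.
by apply: (util_AL_lt e_irr n0 hw); rewrite /avgF FC; apply: less.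
Qed.

Lemma avgFi_nonfringe (C : {set T}) x : x \in C -> x \in K -> x \notin Fr ->
  avgFi e x C = base_val C + a * (#|C :&: K :&: attached C|%:R / #|C :&: K|%:R).
Proof.
move=> xC xK xF; have xCK : x \in C :&: K by rewrite inE xC xK.
rewrite /avgFi friends_nonfringe // setD1K //; apply: avg_val_base => //.
by apply/set0Pn; exists x.
Qed.

Lemma avgF_nonfringe (C : {set T}) x : x \in C -> x \in K -> x \notin Fr ->
  (1 < #|C :&: K|)%N ->
  avgF e x C = base_val C + a * (#|C :&: K :&: attached C|%:R / (#|C :&: K| - 1)%:R).
Proof.
move=> xC xK xF s2; have xCK : x \in C :&: K by rewrite inE xC xK.
have cD := cardsD1 x (C :&: K); rewrite xCK /= in cD.
have -> : C :&: K :&: attached C = ((C :&: K) :\ x) :&: attached C.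
  by apply/setP => z; rewrite !inE; case: (eqVneq z x) => [->|]; rewrite ?(negbTE xF) ?andbF.
rewrite /avgF friends_nonfringe // avg_val_base ?subD1set //; last by rewrite -card_gt0; lia.
by congr (_ + _ * (_ / _%:R)); lia.
Qed.

Hypotheses (d_gt0 : (0 < d)%N) (K_ge : (d + 3 <= #|K|)%N)
  (n_ge : ((#|K| + d + 1) * (d + 1) <= n)%N).

Lemma nonfringe_counts (C : {set T}) x : x \in C -> x \in K -> x \notin Fr -> C != P :\ p ->
  let s := #|C :&: K| in let E := #|C :&: K :&: attached C| in
  [/\ (0 < s <= #|K|)%N, (s <= #|C|)%N, (E < s)%N, (E <= d)%N
    & (s = #|K| -> E = d -> #|P| <= #|C|)%N].
Proof.
move=> xC xK xF CP s E; rewrite {}/s {}/E; have xCK : x \in C :&: K by rewrite inE xC xK.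
have EF : C :&: K :&: attached C \subset Fr.
  by apply/subsetP => y; rewrite !inE => /andP[_ /andP[]].
split.
- by rewrite card_gt0 (subset_leq_card (subsetIr _ _)) andbT; apply/set0Pn; exists x.
- exact: subset_leq_card (subsetIl _ _).
- apply: proper_card; rewrite properEneq subsetIl andbT.
  by apply: contraTneq xCK => <-; rewrite !inE (negbTE xF) !andbF.
- by rewrite -(frame_card_fringe G) subset_leq_card.
move=> sk Ed; rewrite leqNgt; apply/negP => cN.
have KC : K \subset C.
  have /eqP <- : C :&: K == K by rewrite eqEcard subsetIr sk leqnn.
  exact: subsetIl.
have FrC : Fr \subset attached C.
  have /eqP <- : C :&: K :&: attached C == Fr.
    by rewrite eqEcard EF (frame_card_fringe G) Ed leqnn.
  exact: subsetIr.
have sub := covers_all_but_top KC FrC.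
have := cardsD1 p P; rewrite (frame_top G) => /= cP.
by move: CP; rewrite eq_sym eqEcard sub /=; lia.
Qed.

Let n_gt0 : (0 < n)%N. Proof. by apply/card_gt0P; exists p. Qed.

Let P_gt0 : (0 < #|P|)%N. Proof. by apply/card_gt0P; exists p; exact: frame_top G. Qed.

Let base_P_card : #|P :&: K| = #|K|. Proof. by rewrite setI_P_base. Qed.

Let attached_P_card : #|P :&: K :&: attached P| = d.
Proof. by rewrite setI_P_base base_attached_P (frame_card_fringe G). Qed.

Lemma base_val_P_gt0 : 0 < base_val P.
Proof.
have K1 : (1 <= #|K|)%N by lia.
have : (#|P| < (n + 1) * (#|K| - 1) + 1)%N by have := frame_card G; nia.
rewrite -(ltr_nat rat) natrD natrM (natrB _ K1) => lt.
by rewrite /base_val base_P_card subr_gt0 ltrBlDr.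
Qed.

Lemma nonfringe_no_gain kind w (C : {set T}) x : (n ^ 4)%:R <= w ->
  x \in C -> x \in K -> x \notin Fr -> C != P :\ p ->
  util e kind w x C <= util e kind w x P.
Proof.
move=> hw xC xK xF CP; have xP := base_P xK.
have [sk sc Es Ed full] := nonfringe_counts xC xK xF CP.
have N_le := frame_card G.
case: kind => /=.
  rewrite (avgFi_nonfringe xC) // (avgFi_nonfringe xP) // /base_val base_P_card attached_P_card.
  exact: eq_bonus_le.
have AL_lt := util_AL_lt e_irr n_gt0 hw.
have avgP : avgF e x P = base_val P + a * (d%:R / (#|K| - 1)%:R).
  by rewrite (avgF_nonfringe xP) // base_P_card ?attached_P_card //; lia.
have [s1|s2] := leqP #|C :&: K| 1.
  apply/ltW/AL_lt; rewrite avgP /avgF friends_nonfringe //.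
  have -> : (C :&: K) :\ x = set0.
    apply/eqP; rewrite -cards_eq0; have := cardsD1 x (C :&: K); rewrite inE xC xK /=; lia.
  rewrite /Defs.avg_over eqxx ltr_wpDr ?base_val_P_gt0 //.
  by rewrite mulr_ge0 ?divr_ge0.
have avgC := avgF_nonfringe xC xK xF s2.
have [[sK EK]|small] : (#|C :&: K| = #|K| /\ #|C :&: K :&: attached C| = d) \/
    (#|C :&: K| < #|K| \/ #|C :&: K :&: attached C| < d)%N by lia.
  have base_le : base_val C <= base_val P.
    by rewrite /base_val sK base_P_card lerD2l lerN2 lerD2r ler_nat; exact: full.
  rewrite avgC avgP sK EK; apply: lerD.
    have attx : x \in attached C = false by rewrite in_attached (negbTE xF).
    by rewrite !val_base // attx attached_P (negbTE xF) !addr0.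
  by apply: ler_wpM2l; [apply: le_trans hw | rewrite lerD2r].
apply/ltW/AL_lt; rewrite avgC avgP /base_val base_P_card.
apply: al_bonus_lt => //; lia.
Qed.

Lemma fringe_val_le (C : {set T}) x z : C :&: K \subset Fr -> x \in C -> x \in Fr ->
  z \in x |: (C :&: friends e x) -> val z C <= (n * (d + 1))%:R.
Proof.
move=> CKF xC xF zS; have xK := fringe_base xF.
have s_le : (#|C :&: K| <= d)%N by rewrite -(frame_card_fringe G) subset_leq_card.
have zC : z \in C by move: zS; rewrite !inE => /orP[/eqP ->|/andP[]].
apply: le_trans (@val_le_friends _ e z C) _; rewrite ler_nat leq_mul //.
case: (boolP (z \in K)) => zK.
  rewrite card_friends_base //; have := cardsD1 z (C :&: K); rewrite inE zC zK /=.
  by case: (z \in attached C); lia.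
have -> : z = mu x.
  move: zS; rewrite !inE => /orP[/eqP ez|/andP[_]]; first by rewrite ez xK in zK.
  by rewrite edge_base_out // xF => /eqP.
have [muP muK mup _] := frame_mid G xF.
have : friends e (mu x) :&: C \subset p |: (C :&: K).
  apply/subsetP => u; rewrite !inE => /andP[eu uC].
  have := frame_mid_edge G muP mup muK (P_closed muP mup eu) eu.
  by case/orP => [->//|/fringe_base ->]; rewrite uC orbT.
move/subset_leq_card; rewrite cardsU1 => le; apply: leq_trans le _.
by rewrite addnC leq_add // leq_b1.
Qed.

Lemma val_mid_P x : x \in Fr -> a - (#|P|%:R - 1) <= val (mu x) P.
Proof.
move=> xF; have [muP _ _ mu_top] := frame_mid G xF.
rewrite val_mem // lerD2r ler_peMr // ler1n card_gt0.
by apply/set0Pn; exists p; rewrite !inE mu_top (frame_top G).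
Qed.

Lemma avgFi_fringe_P_gt x : x \in Fr -> (n * (d + 1))%:R < avgFi e x P.
Proof.
move=> xF; have xK := fringe_base xF; have [_ muK _ _] := frame_mid G xF.
rewrite /avgFi friends_fringe_P // setUCA setD1K //.
have cU : #|mu x |: K| = (#|K| + 1)%N by rewrite cardsU1 muK addnC.
rewrite avg_over_sum; last by apply/set0Pn; exists (mu x); rewrite setU11.
rewrite (big_setU1 _ muK) /= sum_val_base ?setI_P_base // base_attached_P (frame_card_fringe G).
rewrite cU ltr_pdivlMr; last by rewrite ltr0n addn1.
apply: lt_le_trans (eq_fringe_sum_gt d_gt0 K_ge P_gt0 (frame_card G) n_ge) _.
by rewrite /base_val base_P_card lerD2r val_mid_P.
Qed.

Lemma avgF_fringe_P_gt x : x \in Fr -> (n * (d + 1))%:R < avgF e x P.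
Proof.
move=> xF; have xK := fringe_base xF; have [muP muK _ _] := frame_mid G xF.
have muKx : mu x \notin K :\ x by rewrite !inE negb_and muK orbT.
have cU : #|mu x |: (K :\ x)| = #|K|.
  by rewrite cardsU1 muKx (cardsD1 x K) xK.
rewrite /avgF friends_fringe_P // avg_over_sum; last by apply/set0Pn; exists (mu x); rewrite setU11.
rewrite (big_setU1 _ muKx) /= cU ltr_pdivlMr ?ltr0n; last lia.
have sumKx : \sum_(i in K :\ x) val i P = \sum_(i in K) val i P - val x P.
  by rewrite [in RHS](big_setD1 x xK) /= addrC addrK.
rewrite sumKx sum_val_base ?setI_P_base // base_attached_P (frame_card_fringe G).
rewrite (val_base (base_P xK) xK).
rewrite attached_P xF.
apply: lt_le_trans (al_fringe_sum_gt d_gt0 K_ge P_gt0 (frame_card G) n_ge) _.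
by rewrite /base_val base_P_card lerD2r val_mid_P.
Qed.

Lemma fringe_no_gain kind w (C : {set T}) x : (n ^ 4)%:R <= w ->
  C :&: K \subset Fr -> x \in C -> x \in Fr ->
  util e kind w x C <= util e kind w x P.
Proof.
move=> hw CKF xC xF.
have B0 : 0 <= (n * (d + 1))%:R :> rat by [].
have bound := fringe_val_le CKF xC xF.
case: kind => /=.
  exact/ltW/(le_lt_trans (avg_over_le B0 bound))/avgFi_fringe_P_gt.
apply/ltW/(util_AL_lt e_irr n_gt0 hw)/(le_lt_trans _ (avgF_fringe_P_gt xF)).
by apply: avg_over_le => // z zF; apply: bound; rewrite setU1r.
Qed.

Lemma frame_blocking_disjoint kind w (Gamma : {set {set T}}) (C : {set T}) :
  (n ^ 4)%:R <= w -> partition Gamma [set: T] -> P \in Gamma ->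
  blocks e kind w Gamma C -> [disjoint C & K].
Proof.
move=> hw /and3P[_ triv _] PG [_ blk].
have gain x : x \in C -> x \in K -> util e kind w x P < util e kind w x C.
  by move=> xC xK; rewrite -(def_pblock triv PG (base_P xK)); exact: blk.
rewrite -setI_eq0; apply/negPn/negP => /set0Pn [x0 /setIP [x0C x0K]].
have [CP|CP] := eqVneq C (P :\ p).
  have [y yF] : exists y, y \in Fr by apply/set0Pn; rewrite -card_gt0 (frame_card_fringe G).
  have yK := fringe_base yF.
  have := gain y; rewrite CP !inE base_top // base_P // => /(_ isT yK).
  by rewrite ltNge (ltW (top_removed_no_gain kind hw yF)).
have [/exists_inP [x /setIP [xC xK] xF]|] := boolP [exists x in C :&: K, x \notin Fr].
  by have := gain x xC xK; rewrite ltNge (nonfringe_no_gain kind hw xC xK xF CP).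
move/exists_inPn => CKF; have {}CKF : C :&: K \subset Fr.
  by apply/subsetP => z /CKF; rewrite negbK.
have x0F : x0 \in Fr by apply: (subsetP CKF); rewrite inE x0C x0K.
by have := gain x0 x0C x0K; rewrite ltNge (fringe_no_gain kind hw CKF x0C x0F).
Qed.
End DomeFrame.

Section Gadgets.
Variables (T : finType) (e : rel T) (d k' : nat) (P K : {set T}) (p : T).

Lemma dome_gadget_frame : dome_gadget e d k' P p K ->
  #|K| = (k' - d - 1)%N /\ exists Fr mu, dome_frame e P p K Fr mu d.
Proof.
case=> m [f [m_inj [f_inj [mfK [pK [cK [defP edge]]]]]]]; split=> //.
set M := [set m j | j : 'I_d]; set Fr := [set f j | j : 'I_d].
pose mu y := if [pick j | f j == y] is Some j then m j else p.
have mu_f j : mu (f j) = m j.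
  by rewrite /mu; case: pickP => [j' /eqP/f_inj -> // | /(_ j)]; rewrite eqxx.
have pP : p \in P by rewrite defP setU11.
have KP : K \subset P by rewrite defP; apply/subsetP => z zK; rewrite !inE zK !orbT.
have mP j : m j \in P by rewrite defP !inE mem_imset ?orbT.
have KM y : y \in K -> y \notin M.
  by move=> yK; apply/imsetP => -[j _ yj]; have [_ [+ _]] := mfK j; rewrite -yj yK.
have Kp y : y \in K -> (y == p) = false by move=> yK; apply: contraTF yK => /eqP ->.
exists Fr, mu; split => //.
- by apply/subsetP => z /imsetP [j _ ->]; have [_ []] := mfK j.
- by rewrite card_imset // ?cardsT card_ord.
- have cM : (#|M| <= d)%N.
    by apply: leq_trans (leq_imset_card _ _) _; rewrite ?cardsT card_ord.
  rewrite defP -/M; apply: leq_trans (leq_card_setU _ _) _; rewrite cards1.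
  by apply: leq_trans (leq_add (leqnn 1) (leq_card_setU _ _)) _; lia.
- move=> y z yK zP; have yP := subsetP KP y yK.
  rewrite edge // Kp // (negbTE (KM y yK)) /= andbF /=.
  have -> : [exists j, (y == m j) && (z == f j)] = false.
    apply/negbTE/existsP => -[j /andP [/eqP yj _]].
    by have := KM y yK; rewrite yj mem_imset.
  have -> : [exists j, (z == m j) && (y == f j)] = (y \in Fr) && (z == mu y).
    apply/existsP/andP => [[j /andP [/eqP -> /eqP ->]] | [/imsetP [j _ ->] /eqP ->]].
      by rewrite mem_imset // mu_f.
    by exists j; rewrite mu_f !eqxx.
  by rewrite yK /= (eq_sym y z) orbC.
- move=> y /imsetP [j _ ->]; rewrite mu_f; have [mp [mK _]] := mfK j.
  by split=> //; rewrite edge ?mP // eqxx mem_imset ?orbT.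
- move=> z; rewrite defP !inE => /orP [-> // | /orP [/imsetP [j _ ->] _ _ | -> //]].
  by exists (f j); rewrite ?mem_imset ?mu_f.
move=> z u zP zp zK uP; rewrite edge // (negbTE zp) (negbTE zK) /=.
case/orP => [/andP [-> _] // |]; case/orP => [/existsP [j /andP [_ /eqP ->]] |].
  by rewrite mem_imset ?orbT.
case/orP => [/existsP [j /andP [_ /eqP zj]] | //].
by have [_ [_ fK]] := mfK j; move: zK; rewrite zj fK.
Qed.

Lemma pinched_dome_gadget_frame : (0 < d)%N -> pinched_dome_gadget e d k' P p K ->
  #|K| = (k' - d - 1)%N /\ exists Fr mu, dome_frame e P p K Fr mu d.
Proof.
move=> d_gt0 [q [f [f_inj [qp [qK [pK [fK [cK [defP edge]]]]]]]]]; split=> //.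
set Fr := [set f j | j : 'I_d].
have pP : p \in P by rewrite defP setU11.
have qP : q \in P by rewrite defP !inE eqxx orbT.
have KP : K \subset P by rewrite defP; apply/subsetP => z zK; rewrite !inE zK !orbT.
have FrK : Fr \subset K by apply/subsetP => z /imsetP [j _ ->].
have Kp y : y \in K -> (y == p) = false by move=> yK; apply: contraTF yK => /eqP ->.
have Kq y : y \in K -> (y == q) = false by move=> yK; apply: contraTF yK => /eqP ->.
exists Fr, (fun=> q); split => //.
- by rewrite card_imset // ?cardsT card_ord.
- by rewrite defP cardsU1 cardsU1; case: (p \in _); case: (q \in K); lia.
- move=> y z yK zP; have yP := subsetP KP y yK.
  rewrite edge // (Kp y yK) (Kq y yK) /= !andbF /= yK /= (eq_sym y z) orbC.
  by congr (_ || _); exact: andbC.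
- by move=> y _; split => //; rewrite edge // !eqxx orbT.
- move=> z; rewrite defP !inE => /orP [-> // | /orP [/eqP -> _ _ | -> //]].
  have [y yF] : exists y, y \in Fr.
    by apply/set0Pn; rewrite -card_gt0 card_imset // ?cardsT card_ord.
  by exists y.
move=> z u zP zp zK uP; have zq : z = q.
  by move: zP zp zK; rewrite defP !inE => /orP [-> | /orP [/eqP -> | ->]].
rewrite zq edge // (negbTE qp) eqxx /=; case/orP => [/andP [-> _] // |].
case/orP => [-> | ]; first by rewrite orbT.
by case/orP => [/andP [_ uF] | /and3P []]; [rewrite (subsetP FrK _ uF) in qK | rewrite (negbTE qK)].
Qed.
End Gadgets.

Theorem proposition1 (T : finType) (e : rel T) (kind : ahg_kind) (w : rat)
    (d k' : nat) (P : {set T}) (p : T) (K : {set T})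
    (Gamma : {set {set T}}) (C : {set T}) :
  symmetric e -> irreflexive e ->
  (1 <= d)%N -> (2 * d + 3 < k')%N ->
  (k' * (d + 1) <= #|T|)%N ->
  ((#|T| ^ 4)%N)%:R <= w ->
  dome_gadget e d k' P p K \/ pinched_dome_gadget e d k' P p K ->
  (forall x y, x \in P -> x != p -> e x y -> y \in P) ->
  partition Gamma [set: T] -> P \in Gamma ->
  blocks e kind w Gamma C ->
  [disjoint C & K].
Proof.
move=> _ e_irr d_gt0 k'_gt n_ge hw gadget P_closed part PG block.
have [cK [Fr [mu G]]] : #|K| = (k' - d - 1)%N /\ exists Fr mu, dome_frame e P p K Fr mu d.
  by case: gadget => [/dome_gadget_frame | /(pinched_dome_gadget_frame d_gt0)].
have K_ge : (d + 3 <= #|K|)%N by lia.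
have n_ge' : ((#|K| + d + 1) * (d + 1) <= #|T|)%N.
  by rewrite cK (_ : (k' - d - 1 + d + 1 = k')%N) //; lia.
exact: (frame_blocking_disjoint e_irr G P_closed d_gt0 K_ge n_ge' hw part PG block).
Qed.
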